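(* For all $n\ge0$, \[ c_n^2=c_n+2\sum_{k=0}^{n-3}\sum_{r=3}^{n-k}p_{r-1}c_k c_{n-k-r}^2 . \]
   Context: The Narayana's cows numbers $c_n$ are defined by $c_n=\delta_{n,0}+c_{n-1}+c_{n-3}$ for $n\ge0$, $c_n=0$ for $n<0$. The Padovan numbers $p_n$ are defined by $p_n=\delta_{n,0}+p_{n-2}+p_{n-3}$ for $n\ge0$, $p_n=0$ for $n<0$. $\delta_{i,j}$ is $1$ if $i=j$ and $0$ otherwise. Empty sums are $0$. *)

From mathcomp Require Import all_boot.
Set Implicit Arguments. Unset Strict Implicit. Unset Printing Implicit Defensive.

(* Narayana's cows numbers: c_n = [n=0] + c_{n-1} + c_{n-3}, c_n = 0 for n<0.
   Unfolded: c_0 = 1, c_1 = c_0 = 1, c_2 = c_1 = 1, c_{n+3} = c_{n+2} + c_n. *)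
Fixpoint cows (n : nat) : nat :=
  match n with
  | 0 => 1
  | n1.+1 =>
    match n1 with
    | 0 => 1
    | n2.+1 =>
      match n2 with
      | 0 => 1
      | m.+1 => cows n1 + cows m
      end
    end
  end.

(* Padovan numbers: p_n = [n=0] + p_{n-2} + p_{n-3}, p_n = 0 for n<0.
   Unfolded: p_0 = 1, p_1 = 0, p_2 = p_0 = 1, p_{n+3} = p_{n+1} + p_n. *)
Fixpoint padovan (n : nat) : nat :=
  match n with
  | 0 => 1
  | n1.+1 =>
    match n1 with
    | 0 => 0
    | n2.+1 =>
      match n2 with
      | 0 => 1
      | m.+1 => padovan n2 + padovan m
      end
    end
  end.

Example cows_test : map cows (iota 0 10) = [:: 1;1;1;2;3;4;6;9;13;19]. Proof. by []. Qed.
Example padovan_test : map padovan (iota 0 10) = [:: 1;0;1;1;1;2;2;3;4;5]. Proof. by []. Qed.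
Lemma cows_rec n : cows n = (n == 0) + (if n is m.+1 then cows m else 0)
   + (if n is m.+3 then cows m else 0).
Proof. by case: n => [|[|[|n]]] //=; rewrite addn0. Qed.
Lemma padovan_rec n : padovan n = (n == 0) + (if n is m.+2 then padovan m else 0)
   + (if n is m.+3 then padovan m else 0).
Proof. by case: n => [|[|[|n]]]. Qed.

(* Write (f * g)_m = sum_(i <= m) f_i g_(m-i).  Since (1 - x^2 - x^3) P(x) = 1
   and (1 - x - x^3) C(x) = 1 for the generating functions of p and c, the
   convolutions p * g and c * g obey the recurrences of p and c with g as
   inhomogeneous term.  Induction then gives (p * c^2)_m = c_m c_(m+1) and
   c_(m+3)^2 = c_(m+3) + 2 (c * g)_m with g_j = c_(j+2) c_j.  The inner sum of
   the theorem is (p_(.+2) * c^2)_(n-k-3) = c_(n-k-1) c_(n-k-3), read off from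
   the first identity, so the theorem is the second one. *)
From mathcomp Require Import all_boot.
From mathcomp Require Import zify.

Definition conv (f g : nat -> nat) m := \sum_(i < m.+1) f i * g (m - i).

Lemma conv0 f g : conv f g 0 = f 0 * g 0.
Proof. by rewrite /conv big_ord1. Qed.

Lemma convS f g m : conv f g m.+1 = f 0 * g m.+1 + conv (fun i => f i.+1) g m.
Proof. by rewrite /conv big_ord_recl subn0. Qed.

Lemma convDl f1 f2 g m :
  conv (fun i => f1 i + f2 i) g m = conv f1 g m + conv f2 g m.
Proof. by rewrite /conv -big_split; apply: eq_bigr => i _; rewrite mulnDl. Qed.

Lemma cowsSSS m : cows m.+3 = cows m.+2 + cows m. Proof. by []. Qed.

Lemma conv_padovanSSS g m :
  conv padovan g m.+3 = conv padovan g m.+1 + conv padovan g m + g m.+3.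
Proof.
rewrite !convS -[fun i => padovan i.+3]/(fun i => padovan i.+1 + padovan i).
rewrite convDl [padovan 0]/= [padovan 1]/= [padovan 2]/=.
lia.
Qed.

Lemma conv_cowsSSS g m :
  conv cows g m.+3 = conv cows g m.+2 + conv cows g m + g m.+3.
Proof.
rewrite !convS -[fun i => cows i.+3]/(fun i => cows i.+2 + cows i).
rewrite convDl [cows 0]/= [cows 1]/= [cows 2]/=.
lia.
Qed.

Lemma nat_ind3 (P : nat -> Prop) :
  P 0 -> P 1 -> P 2 -> (forall m, P m -> P m.+1 -> P m.+2 -> P m.+3) ->
  forall m, P m.
Proof.
move=> P0 P1 P2 PS m.
suff [] : [/\ P m, P m.+1 & P m.+2] by [].
by elim: m => [|m [Pm Pm1 Pm2]]; split=> //; apply: PS.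
Qed.

Lemma conv_padovan_sqr_cows m :
  conv padovan (fun i => cows i ^ 2) m = cows m * cows m.+1.
Proof.
elim/nat_ind3: m => [||| m IH0 IH1 _]; try by rewrite ?convS conv0.
rewrite conv_padovanSSS IH0 IH1 (cowsSSS m.+1) (cowsSSS m).
nia.
Qed.

Lemma conv_padovanSS_sqr_cows m :
  conv (fun i => padovan i.+2) (fun i => cows i ^ 2) m = cows m.+2 * cows m.
Proof.
have := conv_padovan_sqr_cows m.+2.
rewrite !convS [padovan 0]/= [padovan 1]/= cowsSSS.
nia.
Qed.

Lemma sum_padovan_sqr_cows m :
  \sum_(3 <= r < m.+4) padovan (r - 1) * cows (m.+3 - r) ^ 2 = cows m.+2 * cows m.
Proof.
rewrite -conv_padovanSS_sqr_cows -[3]/(0 + 3) big_addn !subSS subn0 big_mkord.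
apply: eq_bigr => i _; congr (padovan _ * cows _ ^ 2); lia.
Qed.

Lemma cows_sqr_conv m :
  cows m.+3 ^ 2 = cows m.+3 + 2 * conv cows (fun j => cows j.+2 * cows j) m.
Proof.
elim/nat_ind3: m => [||| m IH0 _ IH2]; try by rewrite ?convS conv0.
rewrite conv_cowsSSS (cowsSSS m.+3).
nia.
Qed.

Theorem mainTheorem16 (n : nat) :
  cows n ^ 2 =
  cows n + 2 * \sum_(0 <= k < n - 2) \sum_(3 <= r < (n - k).+1)
                 padovan (r - 1) * cows k * cows (n - k - r) ^ 2.
Proof.
case: n => [|[|[|m]]]; try by rewrite big_geq.
rewrite cows_sqr_conv !subSS subn0 big_mkord; congr (_ + 2 * _).
apply: eq_bigr => -[k /= lt_k_m1] _.
have -> : m.+3 - k = (m - k).+3 by lia.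
rewrite -sum_padovan_sqr_cows big_distrr.
by apply: eq_bigr => r _; rewrite /= mulnA (mulnC (cows k)).
Qed.
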